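(* For all integers $k\ge 2$, $s\in\mathbb{N}$ and every $\delta>0$, there exist $\gamma=\gamma(k,s,\delta)>0$ and $n_0$ such that the following holds for all $n\ge n_0$. Let $G$ be a $k$-uniform hypergraph on $n$ vertices with $\min\{e(G),\binom{n}{k}-e(G)\}\ge\delta n^k$, and let $W\subseteq\binom{V(G)}{k}$ satisfy $|W|\le\gamma n^k$. Then $G$ contains, as an induced subhypergraph, a non-homogeneous $(k,k,s)$-pattern $F$ that avoids $W$, i.e. $\binom{V(F)}{k}\cap W=\emptyset$.
   Context: For $k,t,s\in\mathbb{N}$ with $k,t\ge 2$, a $(k,t,s)$-pattern is a $k$-uniform hypergraph $F$ admitting a partition $V(F)=V_1\cup\cdots\cup V_t$ into parts of size $s$ each, such that for every $S\in\binom{V(F)}{k}$, whether $S\in E(F)$ depends only on $(|S\cap V_1|,\ldots,|S\cap V_t|)$. $F$ is homogeneous if it is empty (no edges) or complete (all $k$-subsets are edges). *)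

From HB Require Import structures.
From mathcomp Require Import all_boot all_order all_algebra.
From mathcomp Require Import reals.
Set Implicit Arguments. Unset Strict Implicit. Unset Printing Implicit Defensive.

(* A k-uniform hypergraph on vertex set 'I_n is given by its edge set
   E : {set {set 'I_n}} with every edge of size k. *)

Definition k_uniform (n k : nat) (E : {set {set 'I_n}}) : Prop :=
  forall e, e \in E -> #|e| = k.

Definition ksubsets (n k : nat) (U : {set 'I_n}) : {set {set 'I_n}} :=
  [set S : {set 'I_n} | (S \subset U) && (#|S| == k)].

Definition parts_of_size (n t s : nat) (V : 'I_t -> {set 'I_n}) : Prop :=
  (forall i, #|V i| = s) /\ (forall i j, i != j -> [disjoint V i & V j]).

Definition parts_union (n t : nat) (V : 'I_t -> {set 'I_n}) : {set 'I_n} :=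
  \bigcup_(i < t) V i.

(* The induced subhypergraph G[U] of G = ('I_n, E), with U the union of the
   parts V, is a (k,t,s)-pattern with respect to the partition V: whether a
   k-subset of U is an edge depends only on its intersection profile
   (|S ∩ V_1|, ..., |S ∩ V_t|). *)
Definition induced_pattern (n k t s : nat) (E : {set {set 'I_n}})
    (V : 'I_t -> {set 'I_n}) : Prop :=
  parts_of_size s V /\
  forall S S', S \in ksubsets k (parts_union V) -> S' \in ksubsets k (parts_union V) ->
    (forall i, #|S :&: V i| = #|S' :&: V i|) -> (S \in E) = (S' \in E).

Definition homogeneous_on (n k : nat) (E : {set {set 'I_n}}) (U : {set 'I_n}) : Prop :=
  (forall S, S \in ksubsets k U -> S \notin E) \/
  (forall S, S \in ksubsets k U -> S \in E).

Definition avoids (n k : nat) (U : {set 'I_n}) (W : {set {set 'I_n}}) : Prop :=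
  forall S, S \in ksubsets k U -> S \notin W.

(* Supersaturation followed by Ramsey theory.  Counting pairs (edge, non-edge) of k-tuples, G has
   at least delta^2 n^(2k) maps x : 'I_(2k) -> 'I_n whose first half spans an edge and whose
   second half spans a non-edge.  Applying Hölder's inequality to one coordinate at a time upgrades
   this to at least eps n^M maps B : 'I_(2k) * 'I_(L+1) -> 'I_n all of whose transversals have
   this property, where eps = delta^(2 (L+1)^(2k)) and M = 2k(L+1).  Only O(n^(M-1)) of these maps
   are non-injective and at most |W| M^k n^(M-k) of them cover a set of W, so for gamma small and
   n large some B is injective and avoids W.  The product Ramsey theorem finds in the 2k rows of B
   blocks of size s on which adjacency depends only on the intersection profile.  Trading the
   blocks of the first half for those of the second half one at a time, some trade turns an edge
   into a non-edge; the k blocks used just before or just after it then form a non-homogeneous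
   pattern, witnessed by a k-set inside the k-1 blocks common to both. *)

From HB Require Import structures.
From mathcomp Require Import all_boot all_order all_algebra.
From mathcomp Require Import reals.
From mathcomp Require Import zify.
From mathcomp.algebra_tactics Require Import ring lra.
Set Implicit Arguments. Unset Strict Implicit. Unset Printing Implicit Defensive.

Section FinsetFacts.
Variable T : finType.
Implicit Types A B S : {set T}.

Definition subset_of_card A m : {set T} := [set x in take m (enum A)].

Lemma subset_of_cardP A m : m <= #|A| ->
  subset_of_card A m \subset A /\ #|subset_of_card A m| = m.
Proof.
move=> le_mA; split.
  by apply/subsetP => x; rewrite inE => /mem_take; rewrite mem_enum.
by rewrite cardsE (card_uniqP _) ?take_uniq ?enum_uniq // size_takel -?cardE.
Qed.

Lemma card_bigcup_le (I : finType) (F : I -> {set T}) :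
  #|\bigcup_i F i| <= \sum_i #|F i|.
Proof.
elim/big_rec2: _ => [|i n U _ IH]; first by rewrite cards0.
by apply: leq_trans (leq_card_setU _ _) _; rewrite leq_add2l.
Qed.

Lemma card_bigcup_disjoint (I : finType) (P : pred I) (F : I -> {set T}) :
  (forall i j, P i -> P j -> i != j -> [disjoint F i & F j]) ->
  #|\bigcup_(i | P i) F i| = \sum_(i | P i) #|F i|.
Proof.
move=> disjF; have card_sum (A : {set T}) : #|A| = \sum_x (x \in A : nat).
  by rewrite -sum1_card big_mkcond; apply: eq_bigr => x _; case: (x \in A).
have count x : (x \in \bigcup_(i | P i) F i : nat) = \sum_(i | P i) (x \in F i : nat).
  case: bigcupP => [[i Pi x_i]|none]; last first.
    by rewrite big1 // => i Pi; case: (boolP (x \in F i)) => // x_i; case: none; exists i.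
  rewrite (bigD1 i) //= x_i big1 // => j /andP [Pj neq_ji].
  by rewrite (disjointFr (disjF i j Pi Pj _) x_i) // eq_sym.
rewrite card_sum (eq_bigr _ (fun x _ => count x)) exchange_big.
by apply: eq_bigr => i _; rewrite card_sum.
Qed.

Lemma setDI_disjoint S A B : [disjoint A & B] -> (S :\: A) :&: B = S :&: B.
Proof.
move=> dAB; apply/setP => x; rewrite !inE.
by case xB: (x \in B); rewrite ?andbF ?andbT // (disjointFl dAB xB).
Qed.

Lemma pigeonhole (C : finType) (col : T -> C) S s :
  #|C| * s < #|S| -> exists c0, s < #|[set x in S | col x == c0]|.
Proof.
move=> big_S; apply/existsP; move: big_S; apply: contraLR; rewrite negb_exists => /forallP small.
rewrite -leqNgt -sum1_card (partition_big col predT) //= -sum_nat_const.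
apply: leq_sum => c0 _; move: (small c0); rewrite -leqNgt; apply: leq_trans.
by rewrite -sum1_card; apply/eq_leq/eq_bigl => x; rewrite inE.
Qed.

End FinsetFacts.

(** * Ramsey theory *)

Section Ramsey.
Variables (T C : finType) (chi : {set T} -> C).

Definition monochromatic j (S : {set T}) :=
  forall A B : {set T}, A \subset S -> B \subset S -> #|A| = j -> #|B| = j -> chi A = chi B.

Lemma monochromaticS j (S S' : {set T}) : S' \subset S -> monochromatic j S -> monochromatic j S'.
Proof. by move=> sS'S mono A B AS' BS'; apply: mono; apply: subset_trans sS'S. Qed.

(* Erdos-Rado: each vertex v sees a single colour [col v] on the j-sets of the vertices added
   before it. *)
Inductive end_homogeneous (j : nat) (col : T -> C) : {set T} -> Prop :=
| EndHom0 : end_homogeneous j col set0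
| EndHomU v (S : {set T}) : v \notin S -> end_homogeneous j col S ->
    (forall R : {set T}, R \subset S -> #|R| = j -> chi (v |: R) = col v) ->
    end_homogeneous j col (v |: S).

Lemma end_homogeneous_eq j col col' (S : {set T}) :
  end_homogeneous j col S -> {in S, col' =1 col} -> end_homogeneous j col' S.
Proof.
elim=> [|v S0 vS _ IH hom_v] eq_col; first exact: EndHom0.
apply: EndHomU => // [|R RS cardR]; last by rewrite eq_col ?setU11 // hom_v.
by apply: IH => x xS; rewrite eq_col // setU1r.
Qed.

Lemma end_homogeneous_const j col (S U A : {set T}) c0 :
  end_homogeneous j col S -> U \subset S -> {in U, forall x, col x = c0} ->
  A \subset U -> #|A| = j.+1 -> chi A = c0.
Proof.
move=> hom; elim: hom U A => [|v S0 vS _ IH hom_v] U A US colU AU cardA.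
  by move: cardA (subset_trans AU US); rewrite subset0 => + /eqP A0; rewrite A0 cards0.
have sUv : U :\ v \subset S0.
  by apply/subsetP => x /setD1P [xv /(subsetP US)]; rewrite in_setU1 (negbTE xv).
case vA: (v \in A); last first.
  apply: (IH (U :\ v)) => // [x /setD1P [_ /colU] //|].
  by apply/subsetP => x xA; rewrite in_setD1 (subsetP AU) // andbT; apply: contraFneq vA => <-.
rewrite -(setD1K vA) hom_v ?colU ?(subsetP AU) //.
  by apply: subset_trans sUv; apply: setSD.
by move: cardA; rewrite (cardsD1 v A) vA => -[].
Qed.

End Ramsey.

Definition ramsey_property j := forall c s, exists N, forall (T C : finType)
  (chi : {set T} -> C) (Y : {set T}), #|C| <= c -> N <= #|Y| ->
  exists S : {set T}, [/\ S \subset Y, #|S| = s & monochromatic chi j S].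

Lemma end_homogeneous_exists j : ramsey_property j -> forall c m, exists M,
  forall (T C : finType) (chi : {set T} -> C) (Y : {set T}), #|C| <= c -> M <= #|Y| ->
  exists (S : {set T}) (col : T -> C), [/\ S \subset Y, #|S| = m & end_homogeneous chi j col S].
Proof.
move=> ramsey_j c; elim=> [|m [M IHm]].
  exists 0 => T C chi Y _ _; exists set0, (fun _ => chi set0).
  by rewrite sub0set cards0; split=> //; apply: EndHom0.
have [N HN] := ramsey_j c M; exists N.+1 => T C chi Y cardC cardY.
have [v vY] : exists v, v \in Y by apply/set0Pn; rewrite -card_gt0 (leq_trans _ cardY).
have cardYv : N <= #|Y :\ v| by move: cardY; rewrite (cardsD1 v Y) vY.
have [S' [S'Y cardS' mono]] := HN T C (fun R => chi (v |: R)) _ cardC cardYv.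
have [S [col [SS' cardS hom]]] := IHm T C chi S' cardC (eq_leq (esym cardS')).
have vS : v \notin S by apply/negP => /(subsetP SS') /(subsetP S'Y); rewrite !inE eqxx.
pose cv := chi (v |: subset_of_card S j).
exists (v |: S), (fun x => if x == v then cv else col x); split.
- by rewrite subUset sub1set vY (subset_trans SS') // (subset_trans S'Y) ?subsetDl.
- by rewrite cardsU1 vS cardS.
apply: EndHomU => // [|R RS cardR].
  by apply: end_homogeneous_eq hom _ => x xS; case: eqP => // xv; rewrite -xv xS in vS.
have le_jS : j <= #|S| by rewrite -cardR subset_leq_card.
have [sub_jS card_jS] := subset_of_cardP le_jS.
by rewrite eqxx; apply: mono; rewrite ?(subset_trans _ SS').
Qed.

Lemma ramsey_propertyS j : ramsey_property j -> ramsey_property j.+1.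
Proof.
move=> ramsey_j c s; have [M HM] := end_homogeneous_exists ramsey_j c (c * s).+1.
exists M => T C chi Y cardC cardY.
have [S [col [SY cardS hom]]] := HM T C chi Y cardC cardY.
have [c0 big_c0] : exists c0, s < #|[set x in S | col x == c0]|.
  by apply: pigeonhole; rewrite cardS ltnS leq_mul2r cardC orbT.
set U := [set x in S | col x == c0] in big_c0.
have US : U \subset S by apply/subsetP => x; rewrite inE => /andP [].
have colU : {in U, forall x, col x = c0} by move=> x; rewrite inE => /andP [_ /eqP].
have [S0U cardS0] := subset_of_cardP (ltnW big_c0).
exists (subset_of_card U s); split => //; first exact: subset_trans S0U (subset_trans US SY).
move=> A B AS0 BS0 cardA cardB.
by rewrite !(end_homogeneous_const hom US colU) ?(subset_trans _ S0U).
Qed.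

Lemma ramsey j : ramsey_property j.
Proof.
elim: j => [|j /ramsey_propertyS //] c s.
exists s => T C chi Y _ cardY; have [SY cardS] := subset_of_cardP cardY.
by exists (subset_of_card Y s); split => // A B _ _ /cards0_eq -> /cards0_eq ->.
Qed.

Lemma ramsey_upto K c s : exists N, forall (T C : finType) (chi : {set T} -> C)
  (Y : {set T}), #|C| <= c -> N <= #|Y| ->
  exists S : {set T}, [/\ S \subset Y, #|S| = s & forall j, j <= K -> monochromatic chi j S].
Proof.
elim: K s => [|K IHK] s.
  have [N HN] := ramsey 0 c s; exists N => T C chi Y cardC cardY.
  have [S [SY cardS mono]] := HN T C chi Y cardC cardY.
  by exists S; split => // j; rewrite leqn0 => /eqP ->.
have [N1 HN1] := ramsey K.+1 c s; have [N HN] := IHK N1.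
exists N => T C chi Y cardC cardY.
have [S1 [S1Y cardS1 mono1]] := HN T C chi Y cardC cardY.
have [S [SS1 cardS mono]] := HN1 T C chi S1 cardC (eq_leq (esym cardS1)).
exists S; split=> // [|j]; first exact: subset_trans SS1 S1Y.
by rewrite leq_eqVlt ltnS => /predU1P [-> // | /mono1]; apply: monochromaticS.
Qed.

Section ProductRamsey.
Variables (T C : finType).
Implicit Types (chi : {set T} -> C) (R S U X Z : {set T}).

Definition profile_invariant chi K r (B : r.-tuple {set T}) :=
  forall S S', S \subset \bigcup_i tnth B i -> S' \subset \bigcup_i tnth B i ->
    #|S| <= K -> #|S'| <= K -> (forall i, #|S :&: tnth B i| = #|S' :&: tnth B i|) ->
    chi S = chi S'.

Definition pairwise_disjoint r (B : r.-tuple {set T}) :=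
  forall i j, i != j -> [disjoint tnth B i & tnth B j].

Lemma pairwise_disjointS r (A B : r.-tuple {set T}) :
  (forall i, tnth A i \subset tnth B i) -> pairwise_disjoint B -> pairwise_disjoint A.
Proof. by move=> AB disjB i j /disjB dB; apply: disjointWl (AB i) (disjointWr (AB j) dB). Qed.

Lemma pairwise_disjoint_cons r (B0 : {set T}) (Bs : r.-tuple {set T}) :
  pairwise_disjoint [tuple of B0 :: Bs] ->
  [disjoint B0 & \bigcup_i tnth Bs i] /\ pairwise_disjoint Bs.
Proof.
move=> disjB; split.
  by apply: bigcup_disjoint => i _; have := disjB _ _ (neq_lift ord0 i); rewrite tnth0 tnthS.
by move=> i j neq_ij; have := disjB _ _ (contra_neq (@lift_inj _ ord0 i j) neq_ij); rewrite !tnthS.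
Qed.

Lemma bigcup_tuple_cons r (B0 : {set T}) (Bs : r.-tuple {set T}) :
  \bigcup_(i < r.+1) tnth [tuple of B0 :: Bs] i = B0 :|: \bigcup_i tnth Bs i.
Proof. by rewrite big_ord_recl tnth0; congr (_ :|: _); apply: eq_bigr => i _; exact: tnthS. Qed.

Lemma profile_invariant_cons chi K r (B0 : {set T}) U (Bs : r.-tuple {set T}) :
  \bigcup_i tnth Bs i \subset U -> [disjoint B0 & U] ->
  (forall X X' R, X \subset B0 -> X' \subset B0 -> #|X| = #|X'| -> #|X| <= K ->
     R \subset U -> chi (X :|: R) = chi (X' :|: R)) ->
  (forall X, X \subset B0 -> #|X| <= K -> profile_invariant (fun R => chi (X :|: R)) K Bs) ->
  profile_invariant chi K [tuple of B0 :: Bs].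
Proof.
move=> BsU disjB0U hom0 inv_rest S S'; rewrite bigcup_tuple_cons => SB S'B cardS cardS' prof.
have restP Z : Z \subset B0 :|: \bigcup_i tnth Bs i -> Z :\: B0 \subset \bigcup_i tnth Bs i.
  by move=> ZB; rewrite subDset.
have restI Z i : (Z :\: B0) :&: tnth Bs i = Z :&: tnth Bs i.
  apply: setDI_disjoint; apply: disjointWr disjB0U; apply: subset_trans BsU.
  exact: bigcup_sup.
have leK Z : #|Z| <= K -> #|Z :&: B0| <= K.
  by apply: leq_trans; apply/subset_leq_card/subsetIl.
have card0 : #|S :&: B0| = #|S' :&: B0| by have := prof ord0; rewrite tnth0.
rewrite -(setID S B0) -(setID S' B0) (hom0 _ (S' :&: B0)) ?subsetIr ?leK //; last first.
  exact: subset_trans (restP _ SB) BsU.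
apply: inv_rest; rewrite ?subsetIr ?leK ?restP //.
- by apply: leq_trans cardS; apply/subset_leq_card/subsetDl.
- by apply: leq_trans cardS'; apply/subset_leq_card/subsetDl.
by move=> i; rewrite !restI; have := prof (lift ord0 i); rewrite tnthS.
Qed.

End ProductRamsey.

Lemma ramsey_relative K c s m : exists N, forall (T C : finType) (chi : {set T} -> C)
  (Y U : {set T}), #|C| <= c -> #|U| <= m -> N <= #|Y| ->
  exists B0 : {set T}, [/\ B0 \subset Y, #|B0| = s &
    forall X X' Z : {set T}, X \subset B0 -> X' \subset B0 -> #|X| = #|X'| -> #|X| <= K ->
      Z \subset U -> chi (X :|: Z) = chi (X' :|: Z)].
Proof.
have [N HN] := ramsey_upto K (c.+1 ^ 2 ^ m) s.
exists N => T C chi Y U cardC cardU cardY.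
pose chiU X := [ffun Z : {Z : {set T} | Z \subset U} => chi (X :|: val Z)].
have card_chiU : #|{ffun {Z : {set T} | Z \subset U} -> C}| <= c.+1 ^ 2 ^ m.
  rewrite card_ffun card_sig (eq_card (B := powerset U)) => [|Z]; last by rewrite powersetE.
  rewrite card_powerset (@leq_trans (c.+1 ^ 2 ^ #|U|)) ?leq_pexp2l //.
  by rewrite leq_exp2r ?expn_gt0 // (leq_trans cardC).
have [B0 [B0Y cardB0 monoB0]] := HN _ _ chiU Y card_chiU cardY.
exists B0; split => // X X' Z XB X'B eqX leK ZU.
have := monoB0 _ leK X X' XB X'B erefl (esym eqX).
by move/ffunP/(_ (exist _ Z ZU)); rewrite !ffunE.
Qed.

(* Colour the subsets X of the first row by the map R |-> chi (X :|: R) on subsets of the other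
   rows, shrunk to a bounded size so that there are boundedly many colours; Ramsey makes it depend
   only on #|X|, and induction handles the other rows. *)
Lemma product_ramsey r K c s : exists L, forall (T C : finType) (chi : {set T} -> C)
  (rows : r.-tuple {set T}), #|C| <= c -> (forall i, L <= #|tnth rows i|) ->
  pairwise_disjoint rows ->
  exists Bs : r.-tuple {set T},
    (forall i, tnth Bs i \subset tnth rows i /\ #|tnth Bs i| = s) /\ profile_invariant chi K Bs.
Proof.
elim: r c => [|r IHr] c.
  exists 0 => T C chi rows _ _ _; exists [tuple]; split => [[] //|S S'].
  by rewrite big_ord0 !subset0 => /eqP -> /eqP ->.
have [L1 HL1] := IHr (c ^ K.+1).
have [N HN] := ramsey_relative K c s (r * L1).
exists (maxn N L1) => T C chi rows0 cardC big_rows disj_rows.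
case/tupleP: rows0 big_rows disj_rows => R rows big_rows /pairwise_disjoint_cons [disjR disj_rows].
pose rows' := [tuple subset_of_card (tnth rows i) L1 | i < r].
have rows'P i : tnth rows' i \subset tnth rows i /\ #|tnth rows' i| = L1.
  rewrite tnth_mktuple; apply: subset_of_cardP.
  by have := big_rows (lift ord0 i); rewrite tnthS; apply: leq_trans; apply: leq_maxr.
have disj_rows' := pairwise_disjointS (fun i => (rows'P i).1) disj_rows.
set U := \bigcup_i tnth rows' i.
have cardU : #|U| <= r * L1.
  apply: leq_trans (card_bigcup_le _) _; rewrite -[r in r * _]card_ord -sum_nat_const.
  by apply/eq_leq/eq_bigr => i _; rewrite (rows'P i).2.
have disjRU : [disjoint R & U].
  apply: disjointWr disjR; apply/bigcupsP => i _.
  by apply: subset_trans (rows'P i).1 (bigcup_sup _ _).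
have [B0 [B0R cardB0 hom0]] :=
  HN _ _ chi R U cardC cardU (leq_trans (leq_maxl _ _) (big_rows ord0)).
pose chi' Z := [ffun j : 'I_K.+1 => chi (subset_of_card B0 j :|: Z)].
have card_chi' : #|{ffun 'I_K.+1 -> C}| <= c ^ K.+1 by rewrite card_ffun card_ord leq_exp2r.
have [Bs [BsP invBs]] :=
  HL1 _ _ chi' rows' card_chi' (fun i => eq_leq (esym (rows'P i).2)) disj_rows'.
have BsU : \bigcup_i tnth Bs i \subset U.
  by apply/bigcupsP => i _; apply: subset_trans (BsP i).1 _; apply: bigcup_sup.
have chi'E (X Z : {set T}) :
    X \subset B0 -> #|X| <= K -> Z \subset U -> chi (X :|: Z) = chi' Z (inord #|X|).
  move=> XB leK ZU; rewrite ffunE inordK ?ltnS //.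
  by have [subB0 cardX] := subset_of_cardP (subset_leq_card XB); apply: hom0.
exists [tuple of B0 :: Bs]; split.
  move=> i; case: (unliftP ord0 i) => [j|] ->; rewrite ?tnth0 ?tnthS //.
  by have [Bsj cardBsj] := BsP j; split=> //; apply: subset_trans Bsj (rows'P j).1.
apply: (profile_invariant_cons BsU (disjointWl B0R disjRU) hom0).
move=> X XB leK S S' SBs S'Bs cardS cardS' prof.
by rewrite !chi'E ?(subset_trans _ BsU) //; congr (_ _ _); apply: invBs.
Qed.

(** * Counting maps between finite types *)

Lemma nat_of_forall (I : finType) (P : pred I) :
  ([forall i, P i] : nat) = \prod_i (P i : nat).
Proof.
case: forallP => [allP|/forallP/forallPn [i /negbTE Pi]]; last by rewrite (bigD1 i) //= Pi.
by rewrite big1 // => i _; rewrite allP.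
Qed.

Lemma sum_exists_leq (I J : finType) (P : pred I) (Q : I -> J -> bool) :
  \sum_j ([exists (i | P i), Q i j] : nat) <= \sum_(i | P i) \sum_j (Q i j : nat).
Proof.
rewrite [leqRHS]exchange_big; apply: leq_sum => j _.
by case: existsP => // -[i /andP [Pi Qij]]; rewrite (bigD1 i) //= Qij.
Qed.

Section CountFunctions.
Variables P Y : finType.

Lemma count_ffun_prescribed (P' : finType) (psi : P' -> P) (e : P' -> Y) :
  injective psi ->
  \sum_(B : {ffun P -> Y}) [forall t, B (psi t) == e t] = #|Y| ^ (#|P| - #|P'|).
Proof.
move=> psi_inj.
have splitB (B : {ffun P -> Y}) : [forall t, B (psi t) == e t] =
    \prod_p \prod_(t | psi t == p) (B p == e t : nat) :> nat.
  rewrite nat_of_forall (partition_big psi predT) //=.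
  by apply: eq_bigr => p _; apply: eq_bigr => t /eqP ->.
rewrite (eq_bigr _ (fun B _ => splitB B)).
rewrite -(bigA_distr_bigA (fun p v => \prod_(t | psi t == p) (v == e t : nat))) /=.
have fiber p : \sum_v \prod_(t | psi t == p) (v == e t : nat) =
    if p \in codom psi then 1 else #|Y|.
  case: codomP => [[t0 ->]|notim].
    rewrite (eq_bigr (fun v => (v == e t0 : nat))) => [|v _].
      by rewrite -big_mkcond /= big_pred1_eq.
    by rewrite (big_pred1 t0) // => t /=; rewrite (inj_eq psi_inj).
  rewrite (eq_bigr (fun _ => 1)) ?sum1_card // => v _.
  by rewrite big_pred0 // => t; apply/eqP => eq_t; apply: notim; exists t.
rewrite (eq_bigr _ (fun p _ => fiber p)) (bigID (mem (codom psi))) /=.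
rewrite big1 => [|p ->] //; rewrite mul1n (eq_bigr (fun _ => #|Y|)) => [|p /negbTE ->] //.
rewrite prod_nat_const -(card_codom psi_inj) -[#|P|](cardC (mem (codom psi))) addKn.
by congr (_ ^ _); apply: eq_card => p; rewrite !inE.
Qed.

Lemma count_ffun_eq_at p q : p != q ->
  \sum_(B : {ffun P -> Y}) (B p == B q) = #|Y| ^ #|P|.-1.
Proof.
move=> neq_pq; pose psi (b : bool) := if b then p else q.
have psi_inj : injective psi.
  by case=> [] [] //= /eqP; rewrite ?(negbTE neq_pq) // eq_sym (negbTE neq_pq).
have P_gt1 : 1 < #|P| by apply/card_gt1P; exists p, q.
transitivity (\sum_(v : Y) \sum_(B : {ffun P -> Y}) [forall b, B (psi b) == v]).
  rewrite exchange_big; apply: eq_bigr => B _; rewrite (bigD1 (B p)) //= big1 => [|v neq_v].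
    rewrite addn0; congr nat_of_bool; apply/idP/forallP => [/eqP eqB [] //=|/(_ false)].
      by rewrite eqB.
    by rewrite eq_sym.
  by case: forallP => // /(_ true) /=; rewrite eq_sym (negbTE neq_v).
rewrite (eq_bigr _ (fun v _ => count_ffun_prescribed (fun=> v) psi_inj)).
by rewrite sum_nat_const card_bool -expnS -subSn // subSS subn1.
Qed.

Lemma count_ffun_noninjective :
  \sum_(B : {ffun P -> Y}) ~~ injectiveb B <= #|P| ^ 2 * #|Y| ^ #|P|.-1.
Proof.
have collision (B : {ffun P -> Y}) :
    (~~ injectiveb B : nat) <= [exists (pq : P * P | pq.1 != pq.2), B pq.1 == B pq.2].
  case: existsP => [_|none]; first by case: (~~ _).
  suff /injectiveP -> : injective B by [].
  move=> p q eqB; apply/eqP/negPn/negP => neq_pq; apply: none.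
  by exists (p, q); rewrite /= neq_pq eqB eqxx.
apply: (leq_trans (leq_sum _ _)) => [B _|]; first exact: collision.
apply: leq_trans (sum_exists_leq _ _) _.
rewrite (eq_bigr (fun _ => #|Y| ^ #|P|.-1)) => [|[p q] /= /count_ffun_eq_at //].
by rewrite sum_nat_const leq_mul2r -mulnn -card_prod max_card orbT.
Qed.

Lemma count_ffun_covering k (p0 : P) (y0 : Y) (W : {set {set Y}}) :
  (forall w, w \in W -> #|w| = k) ->
  \sum_(B : {ffun P -> Y}) [exists w in W, w \subset codom B] <=
  #|W| * (#|P| ^ k * #|Y| ^ (#|P| - k)).
Proof.
move=> cardW; pose e (w : {set Y}) (t : 'I_k) := nth y0 (enum w) t.
have e_inj w : w \in W -> injective (e w).
  move=> wW t1 t2 /eqP; rewrite /e nth_uniq ?enum_uniq -?cardE ?cardW //.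
  by move/eqP/val_inj.
have cover (B : {ffun P -> Y}) : ([exists w in W, w \subset codom B] : nat) <=
    [exists (wpsi : {set Y} * {ffun 'I_k -> P} | (wpsi.1 \in W) && injectiveb wpsi.2),
       [forall t, B (wpsi.2 t) == e wpsi.1 t]].
  case: existsP => [[w /andP [wW wB]]|//].
  have e_in t : e w t \in w by rewrite /e -mem_enum mem_nth // -cardE cardW.
  pose psi := [ffun t => odflt p0 [pick p | B p == e w t]].
  have psiK t : B (psi t) = e w t.
    rewrite ffunE; case: pickP => [p /eqP //|none].
    by have /codomP [p eq_p] := subsetP wB _ (e_in t); move: (none p); rewrite eq_p eqxx.
  suff -> : [exists (wpsi : {set Y} * {ffun 'I_k -> P} | (wpsi.1 \in W) && injectiveb wpsi.2),
       [forall t, B (wpsi.2 t) == e wpsi.1 t]] by [].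
  apply/existsP; exists (w, psi); rewrite /= wW.
  apply/andP; split; last by apply/forallP => t; rewrite psiK.
  by apply/injectiveP => t1 t2 eq_psi; apply: (e_inj w wW); rewrite -!psiK eq_psi.
apply: (leq_trans (leq_sum _ _)) => [B _|]; first exact: cover.
apply: leq_trans (sum_exists_leq _ _) _.
rewrite -(pair_big_dep (mem W) (fun _ (psi : {ffun 'I_k -> P}) => injectiveb psi)
  (fun w psi => \sum_(B : {ffun P -> Y}) [forall t, B (psi t) == e w t])) /=.
rewrite -sum_nat_const; apply: leq_sum => w wW.
rewrite (eq_bigr (fun _ => #|Y| ^ (#|P| - k))) => [|psi /injectiveP psi_inj].
  rewrite sum_nat_const leq_mul2r; apply/orP; right.
  by apply: leq_trans (max_card _) _; rewrite card_ffun card_ord.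
by rewrite count_ffun_prescribed // card_ord.
Qed.

End CountFunctions.

(** * Supersaturation by Hölder's inequality *)

Section PowerMean.
Variables (I : finType) (P : {pred I}) (F : I -> nat).

Lemma expn_rearrangement x y m : x ^ m * y + y ^ m * x <= x ^ m * x + y ^ m * y.
Proof.
wlog le_xy : x y / x <= y by move=> H; case: (leqP x y) => [/H|/ltnW /H]; lia.
have : x ^ m <= y ^ m by case: m => // m; rewrite leq_exp2r.
move: (x ^ m) (y ^ m) => X Y; nia.
Qed.

Lemma chebyshev_sum m :
  (\sum_(i in P) F i ^ m) * (\sum_(i in P) F i) <= #|P| * \sum_(i in P) F i ^ m.+1.
Proof.
rewrite -leq_double -!mul2n.
have -> : (\sum_(i in P) F i ^ m) * (\sum_(i in P) F i) =
    \sum_(i in P) \sum_(j in P) F i ^ m * F j.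
  by rewrite big_distrl; apply: eq_bigr => i _; rewrite big_distrr.
have -> : #|P| * \sum_(i in P) F i ^ m.+1 = \sum_(i in P) \sum_(j in P) F i ^ m * F i.
  by rewrite -sum_nat_const exchange_big; apply: eq_bigr => i _; rewrite -expnSr sum_nat_const.
rewrite !mul2n -!addnn [X in X + _ <= _]exchange_big [X in _ <= X + _]exchange_big.
rewrite -!big_split /=.
by apply: leq_sum => i _; rewrite -!big_split; apply: leq_sum => j _; apply: expn_rearrangement.
Qed.

Lemma power_mean_sum m :
  (\sum_(i in P) F i) ^ m.+1 <= #|P| ^ m * \sum_(i in P) F i ^ m.+1.
Proof.
elim: m => [|m IH]; first by rewrite expn0 mul1n; under [leqRHS]eq_bigr do rewrite expn1.
rewrite expnSr (leq_trans (leq_mul IH (leqnn _))) // -mulnA expnSr -mulnA leq_mul2l.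
by rewrite chebyshev_sum orbT.
Qed.

Lemma power_mean_rescale S D x y m : S ^ m.+1 <= x ^ m * D ->
  (S * y ^ m) ^ m.+1 * (x * y ^ m.+1) <= (x * y ^ m.+1) ^ m.+1 * D.
Proof.
move=> le_SD; set e := m * m.+1 + m.+1.
have -> : (S * y ^ m) ^ m.+1 * (x * y ^ m.+1) = S ^ m.+1 * (x * y ^ e).
  by rewrite expnMn -expnM expnD; ring.
have -> : (x * y ^ m.+1) ^ m.+1 * D = x ^ m * D * (x * y ^ e).
  by rewrite expnMn -expnM /e mulSn addnC expnS; ring.
by rewrite leq_mul2r le_SD orbT.
Qed.

End PowerMean.

Section Rows.
Variables (A Lt Y : finType).
Implicit Types (B : {ffun A * Lt -> Y}) (u : {ffun Lt -> Y}).

Definition set_row B a0 u : {ffun A * Lt -> Y} :=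
  [ffun p => if p.1 == a0 then u p.2 else B p].

Definition row_of B a0 : {ffun Lt -> Y} := [ffun l => B (a0, l)].

Lemma row_of_set_row B a0 u : row_of (set_row B a0 u) a0 = u.
Proof. by apply/ffunP => l; rewrite !ffunE /= eqxx. Qed.

Lemma set_row_set_row B a0 u u' : set_row (set_row B a0 u) a0 u' = set_row B a0 u'.
Proof. by apply/ffunP => p; rewrite !ffunE; case: eqP. Qed.

Lemma set_row_of B a0 : set_row B a0 (row_of B a0) = B.
Proof. by apply/ffunP => -[a l]; rewrite !ffunE /=; case: eqP => // ->. Qed.

Lemma set_row_eq B a0 u : (set_row B a0 u == B) = (row_of B a0 == u).
Proof.
by apply/eqP/eqP => [<-|<-]; [exact: row_of_set_row | exact: set_row_of].
Qed.

Lemma sum_by_row (phi : {ffun A * Lt -> Y} -> nat) a0 u0 :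
  \sum_B phi B = \sum_(B | row_of B a0 == u0) \sum_u phi (set_row B a0 u).
Proof.
rewrite (exchange_big_dep predT) // (partition_big (row_of^~ a0) predT) //=.
apply: eq_bigr => u _.
rewrite (reindex_onto (fun B => set_row B a0 u) (fun B => set_row B a0 u0)).
  by apply: eq_bigl => B; rewrite row_of_set_row eqxx set_row_set_row set_row_eq andbT.
by move=> B /eqP <-; rewrite set_row_set_row set_row_of.
Qed.

Lemma card_ffun_by_row a0 u0 :
  #|{ffun A * Lt -> Y}| = #|[pred B | row_of B a0 == u0]| * #|Y| ^ #|Lt|.
Proof.
rewrite -sum1_card (sum_by_row _ a0 u0) -sum_nat_const.
by apply: eq_bigr => B _; rewrite sum1_card card_ffun.
Qed.

Section HolderStep.
Variables (a0 : A) (u0 : {ffun Lt -> Y}) (h : {ffun A * Lt -> Y} -> Y -> bool).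
Hypothesis h_set_row : forall B u v, h (set_row B a0 u) v = h B v.

Let fibre := [pred B | row_of B a0 == u0].
Let deg B := \sum_v (h B v : nat).

Lemma count_all_rows :
  \sum_B [forall l, h B (B (a0, l))] = \sum_(B in fibre) deg B ^ #|Lt|.
Proof.
rewrite (sum_by_row _ a0 u0); apply: eq_bigr => B _.
rewrite /deg -prod_nat_const (bigA_distr_bigA (fun _ v => (h B v : nat))) /=.
apply: eq_bigr => u _; rewrite nat_of_forall; apply: eq_bigr => l _.
by rewrite h_set_row ffunE /= eqxx.
Qed.

Lemma count_one_row l0 :
  \sum_B h B (B (a0, l0)) = (\sum_(B in fibre) deg B) * #|Y| ^ #|Lt|.-1.
Proof.
rewrite (sum_by_row _ a0 u0) big_distrl /=; apply: eq_bigr => B _.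
transitivity (\sum_(u : {ffun Lt -> Y}) \prod_l (if l == l0 then h B (u l) : nat else 1)).
  apply: eq_bigr => u _; rewrite h_set_row ffunE /= eqxx (bigD1 l0) //= eqxx.
  by rewrite big1 ?muln1 // => l /negbTE ->.
rewrite -(bigA_distr_bigA (fun l v => if l == l0 then (h B v : nat) else 1)) /=.
rewrite (bigD1 l0) //=; congr (_ * _); first by apply: eq_bigr => v _; rewrite eqxx.
rewrite (eq_bigr (fun _ => #|Y|)) => [|l /negbTE ->]; last exact: sum1_card.
by rewrite prod_nat_const cardC1.
Qed.

End HolderStep.

(* On the maps with all rows but a0 fixed, the right-hand count is deg^#|Lt| and the left-hand
   one is deg * #|Y|^(#|Lt|-1); conclude by the power mean inequality over these fibres. *)
Lemma holder_row_step a0 l0 (h : {ffun A * Lt -> Y} -> Y -> bool) :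
  (forall B u v, h (set_row B a0 u) v = h B v) ->
  (\sum_B h B (B (a0, l0))) ^ #|Lt| * #|{ffun A * Lt -> Y}| <=
  #|{ffun A * Lt -> Y}| ^ #|Lt| * \sum_B [forall l, h B (B (a0, l))].
Proof.
move=> h_set_row; case: (pickP (@predT {ffun A * Lt -> Y})) => [B0 _|none]; last first.
  by rewrite (eq_card0 none) muln0.
rewrite (count_one_row (row_of B0 a0) h_set_row).
rewrite (count_all_rows (row_of B0 a0) h_set_row).
rewrite (card_ffun_by_row a0 (row_of B0 a0)).
have /prednK <- : 0 < #|Lt| by apply/card_gt0P; exists l0.
by apply: power_mean_rescale; apply: power_mean_sum.
Qed.

End Rows.

Section Blowup.
Variables (r L : nat) (Y : finType) (g : {ffun 'I_r -> Y} -> bool).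
Implicit Types (B : {ffun 'I_r * 'I_L.+1 -> Y}) (c : {ffun 'I_r -> 'I_L.+1}).

Definition blowup_transversal B c : {ffun 'I_r -> Y} := [ffun a => B (a, c a)].

(* [blown_up j B]: every transversal of B taking the first entry of each row a >= j satisfies g;
   this interpolates between a single transversal (j = 0) and all of them (j = r). *)

Definition blown_up j B :=
  [forall c : {ffun 'I_r -> 'I_L.+1},
     [forall a : 'I_r, (j <= a) ==> (c a == ord0)] ==> g (blowup_transversal B c)].

Lemma blown_upP j B :
  reflect (forall c, (forall a : 'I_r, j <= a -> c a = ord0) -> g (blowup_transversal B c))
          (blown_up j B).
Proof.
apply: (iffP forallP) => [all_c c c_0|all_c c]; last first.
  by apply/implyP => /forallP c_0; apply: all_c => a /(implyP (c_0 a)) /eqP.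
by apply: (implyP (all_c c)); apply/forallP => a; apply/implyP => /c_0 ->.
Qed.

Lemma blowup_transversal_set_row B c (a0 : 'I_r) l :
  blowup_transversal (set_row B a0 [ffun=> B (a0, l)]) c =
  blowup_transversal B [ffun a => if a == a0 then l else c a].
Proof. by apply/ffunP => a; rewrite !ffunE /=; case: eqP => [->|]; rewrite ?ffunE. Qed.

Lemma blown_up_set_row0 j B (a0 : 'I_r) : j <= a0 ->
  blown_up j (set_row B a0 [ffun=> B (a0, ord0)]) = blown_up j B.
Proof.
move=> le_ja0; apply/blown_upP/blown_upP => all_c c c_0; have := all_c c c_0;
  rewrite blowup_transversal_set_row; congr (g (blowup_transversal _ _));
  by apply/ffunP => a; rewrite ffunE; case: eqP => // ->; rewrite c_0.
Qed.

Lemma blown_upS B (a0 : 'I_r) :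
  blown_up a0.+1 B = [forall l, blown_up a0 (set_row B a0 [ffun=> B (a0, l)])].
Proof.
apply/blown_upP/forallP => [all_c l|all_l c c_0].
  apply/blown_upP => c c_0; rewrite blowup_transversal_set_row; apply: all_c => a lt_a0a.
  rewrite ffunE; case: eqP => [eq_aa0|_]; last exact/c_0/ltnW.
  by rewrite eq_aa0 ltnn in lt_a0a.
have := blown_upP _ _ (all_l (c a0)) [ffun a => if a == a0 then ord0 else c a].
rewrite blowup_transversal_set_row.
have -> : [ffun a => if a == a0 then c a0 else [ffun a => if a == a0 then ord0 else c a] a] = c.
  by apply/ffunP => a; rewrite !ffunE; case: eqP => // ->.
apply=> a le_a0a; rewrite ffunE; case: eqP => // /eqP neq_aa0.
by apply: c_0; rewrite ltn_neqAle le_a0a andbT eq_sym.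
Qed.

Lemma blown_up_all B : blown_up r B -> forall c, g (blowup_transversal B c).
Proof. by move/blown_upP => all_c c; apply: all_c => a; rewrite leqNgt ltn_ord. Qed.

Definition blowup_count j := \sum_(B : {ffun 'I_r * 'I_L.+1 -> Y}) blown_up j B.

Lemma blowup_count_step (a0 : 'I_r) :
  blowup_count a0 ^ L.+1 * #|{ffun 'I_r * 'I_L.+1 -> Y}| <=
  #|{ffun 'I_r * 'I_L.+1 -> Y}| ^ L.+1 * blowup_count a0.+1.
Proof.
pose h B v := blown_up a0 (set_row B a0 [ffun=> v]).
have -> : blowup_count a0 = \sum_B h B (B (a0, ord0)).
  by apply: eq_bigr => B _; rewrite /h blown_up_set_row0.
have -> : blowup_count a0.+1 = \sum_B [forall l, h B (B (a0, l))].
  by apply: eq_bigr => B _; rewrite blown_upS.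
have := @holder_row_step _ _ _ a0 ord0 h; rewrite card_ord; apply=> B u v.
by rewrite /h set_row_set_row.
Qed.

Lemma blowup_count0 : blowup_count 0 = #|Y| ^ (r * L.+1 - r) * \sum_x g x.
Proof.
pose c0 : {ffun 'I_r -> 'I_L.+1} := [ffun=> ord0].
have blown_up0 B : blown_up 0 B = g (blowup_transversal B c0).
  apply/blown_upP/idP => [|g_c0 c c_0]; first by apply; move=> a _; rewrite ffunE.
  by congr (g (blowup_transversal _ _)): g_c0; apply/ffunP => a; rewrite !ffunE c_0.
have split_x B : (g (blowup_transversal B c0) : nat) =
    \sum_x g x * [forall a, B (a, ord0) == x a].
  rewrite (bigD1 (blowup_transversal B c0)) //= big1 => [|x neq_x].
    rewrite addn0; case: forallP => [_|[] a]; first by case: g.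
    by rewrite !ffunE.
  case: forallP => [eq_x|_]; rewrite ?muln0 //; case/eqP: neq_x.
  by apply/ffunP => a; rewrite !ffunE (eqP (eq_x a)).
rewrite /blowup_count (eq_bigr _ (fun B _ => congr1 nat_of_bool (blown_up0 B))).
rewrite (eq_bigr _ (fun B _ => split_x B)) exchange_big big_distrr /=.
apply: eq_bigr => x _; rewrite -big_distrr mulnC /=; congr (_ * _).
have pair_inj : injective (fun a : 'I_r => (a, @ord0 L)) by move=> a b [].
by rewrite (count_ffun_prescribed x pair_inj) card_prod !card_ord.
Qed.

End Blowup.

Section BlowupRows.
Variables (r L : nat) (Y : finType) (B : {ffun 'I_r * 'I_L.+1 -> Y}).
Hypothesis B_inj : injective B.

Definition blowup_rows : r.-tuple {set Y} := [tuple [set B (a, l) | l : 'I_L.+1] | a < r].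

Lemma card_blowup_rows a : #|tnth blowup_rows a| = L.+1.
Proof. by rewrite tnth_mktuple card_imset ?card_ord // => l l' /B_inj []. Qed.

Lemma blowup_rows_disjoint : pairwise_disjoint blowup_rows.
Proof.
move=> a b neq_ab; rewrite !tnth_mktuple -setI_eq0; apply/eqP/setP => x; rewrite !inE.
apply/andP => -[/imsetP [l _ ->] /imsetP [l' _ /B_inj [eq_ab _]]].
by rewrite eq_ab eqxx in neq_ab.
Qed.

End BlowupRows.

(** * Patterns in a blow-up *)

Section SplitFunctions.
Variables (Y : finType) (m1 m2 : nat).

Definition lpart (x : {ffun 'I_(m1 + m2) -> Y}) : {ffun 'I_m1 -> Y} := [ffun j => x (lshift m2 j)].
Definition rpart (x : {ffun 'I_(m1 + m2) -> Y}) : {ffun 'I_m2 -> Y} := [ffun j => x (rshift m1 j)].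
Definition ffun_cat (u : {ffun 'I_m1 -> Y}) (v : {ffun 'I_m2 -> Y}) : {ffun 'I_(m1 + m2) -> Y} :=
  [ffun i => match split i with inl j => u j | inr j => v j end].

Lemma lpart_cat u v : lpart (ffun_cat u v) = u.
Proof. by apply/ffunP => j; rewrite !ffunE (unsplitK (inl j : 'I_m1 + 'I_m2)). Qed.

Lemma rpart_cat u v : rpart (ffun_cat u v) = v.
Proof. by apply/ffunP => j; rewrite !ffunE (unsplitK (inr j : 'I_m1 + 'I_m2)). Qed.

Lemma ffun_catK x : ffun_cat (lpart x) (rpart x) = x.
Proof.
apply/ffunP => i; rewrite !ffunE.
by case: splitP => j eq_ij; rewrite ffunE; congr (_ _); apply: val_inj.
Qed.

Lemma sum_ffun_cat (F : {ffun 'I_m1 -> Y} -> {ffun 'I_m2 -> Y} -> nat) :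
  \sum_x F (lpart x) (rpart x) = \sum_u \sum_v F u v.
Proof.
rewrite pair_big (reindex (fun p => ffun_cat p.1 p.2)) /=.
  by apply: eq_bigr => -[u v] _; rewrite lpart_cat rpart_cat.
exists (fun x => (lpart x, rpart x)) => [[u v] _|x _]; last exact: ffun_catK.
by rewrite lpart_cat rpart_cat.
Qed.

End SplitFunctions.

Section EdgeNonEdge.
Variables (n k : nat) (E : {set {set 'I_n}}).

Definition edge_at (u : {ffun 'I_k -> 'I_n}) := [set u j | j : 'I_k] \in E.

Definition edge_nonedge (x : {ffun 'I_(k + k) -> 'I_n}) :=
  edge_at (lpart x) && ~~ edge_at (rpart x).

Lemma card_le_count_image_in (P : {set {set 'I_n}}) : 0 < n ->
  {in P, forall e : {set 'I_n}, #|e| = k} ->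
  #|P| <= \sum_(u : {ffun 'I_k -> 'I_n}) ([set u j | j : 'I_k] \in P).
Proof.
move=> n_gt0 cardP; pose x0 := Ordinal n_gt0.
pose enum_fun (e : {set 'I_n}) := [ffun j : 'I_k => nth x0 (enum e) j].
have enum_funK : {in P, cancel enum_fun (fun u => [set u j | j : 'I_k])}.
  move=> e /cardP card_e; apply/setP => x; apply/imsetP/idP => [[j _ ->]|xe].
    by rewrite ffunE -mem_enum mem_nth // -cardE card_e.
  have /(nthP x0) [i lt_i <-] : x \in enum e by rewrite mem_enum.
  by rewrite -cardE card_e in lt_i *; exists (Ordinal lt_i); rewrite ?ffunE.
rewrite -(card_in_imset (can_in_inj enum_funK)) -sum1_card big_mkcond /=.
apply: leq_sum => u _; case: ifP => // /imsetP [e eP ->].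
by have /= -> := enum_funK e eP; rewrite eP.
Qed.

Lemma count_edge_nonedge : 0 < n -> k_uniform k E ->
  #|E| * ('C(n, k) - #|E|) <= \sum_x edge_nonedge x.
Proof.
move=> n_gt0 E_unif; pose NE := [set e : {set 'I_n} | #|e| == k] :\: E.
have card_NE : #|NE| = 'C(n, k) - #|E|.
  rewrite cardsDS ?card_draws ?card_ord //.
  by apply/subsetP => e eE; rewrite inE E_unif.
have count_E : #|E| <= \sum_u edge_at u.
  by apply: card_le_count_image_in => // e /E_unif.
have count_NE : #|NE| <= \sum_u ~~ edge_at u.
  apply: leq_trans (card_le_count_image_in n_gt0 _) _ => [e|].
    by rewrite !inE => /andP [_ /eqP].
  by apply: leq_sum => u _; rewrite /edge_at !inE; case: (~~ _); case: (_ == k).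
rewrite -card_NE (leq_trans (leq_mul count_E count_NE)) // big_distrl /=.
rewrite /edge_nonedge (sum_ffun_cat (fun u v => edge_at u && ~~ edge_at v)).
apply/eq_leq/eq_bigr => u _; rewrite big_distrr; apply: eq_bigr => v _.
by case: (edge_at u); case: (edge_at v).
Qed.

End EdgeNonEdge.

Lemma exists_switch (c : nat -> bool) m :
  c 0 -> ~~ c m -> exists2 t, t < m & c t && ~~ c t.+1.
Proof.
move=> c0; elim: m => [|m IHm] not_cm; first by rewrite c0 in not_cm.
case cm: (c m); first by exists m; rewrite ?cm.
by have [t lt_tm switch] := IHm (negbT cm); exists t => //; apply: ltnW.
Qed.

Section PatternFromBlocks.
Variables (n k s : nat) (E : {set {set 'I_n}}).

Lemma not_homogeneous_on U S1 S2 : S1 \in ksubsets k U -> S2 \in ksubsets k U ->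
  S1 \in E -> S2 \notin E -> ~ homogeneous_on k E U.
Proof. by move=> S1U S2U S1E S2E [/(_ S1 S1U)|/(_ S2 S2U)]; rewrite ?S1E ?(negbTE S2E). Qed.

Variables (r : nat) (Bs : r.-tuple {set 'I_n}).
Hypotheses (cardBs : forall a, #|tnth Bs a| = s) (disjBs : pairwise_disjoint Bs).
Hypothesis invBs : profile_invariant (fun S => S \in E) k Bs.

Lemma induced_pattern_tnth (p : 'I_k -> 'I_r) :
  injective p -> induced_pattern k s E (fun j => tnth Bs (p j)).
Proof.
move=> p_inj; split.
  by split=> [j|i j neq_ij]; [exact: cardBs | apply: disjBs; rewrite (inj_eq p_inj)].
have sub_all (Z : {set 'I_n}) :
    Z \subset parts_union (fun j => tnth Bs (p j)) -> Z \subset \bigcup_a tnth Bs a.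
  by move=> ZU; apply: subset_trans ZU _; apply/bigcupsP => j _; apply: bigcup_sup.
have off (Z : {set 'I_n}) a : Z \subset parts_union (fun j => tnth Bs (p j)) -> a \notin codom p ->
    Z :&: tnth Bs a = set0.
  move=> ZU a_off; apply/setP => x; rewrite !inE; apply/negbTE/andP.
  case=> /(subsetP ZU) /bigcupP [j _ x_j] x_a.
  have neq_ja : p j != a by apply: contraNneq a_off => <-; apply: codom_f.
  by rewrite (disjointFr (disjBs neq_ja) x_j) in x_a.
move=> S S'; rewrite !inE => /andP [SU /eqP cardS] /andP [S'U /eqP cardS'] prof.
apply: invBs; rewrite ?sub_all ?cardS ?cardS' // => a.
by case: (boolP (a \in codom p)) => [/codomP [j ->]|a_off]; [exact: prof | rewrite !off].
Qed.

End PatternFromBlocks.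

Section Hybrid.
Variables (n k s : nat) (E : {set {set 'I_n}}) (Bs : (k + k).-tuple {set 'I_n}).
Hypotheses (cardBs : forall a, #|tnth Bs a| = s) (disjBs : pairwise_disjoint Bs).

Definition hybrid_part t (j : 'I_k) : 'I_(k + k) := if j < t then rshift k j else lshift k j.

Lemma hybrid_part_inj t : injective (hybrid_part t).
Proof.
rewrite /hybrid_part => i j; case: ifP => _; case: ifP => _ //.
- exact: rshift_inj.
- by move/eqP; rewrite eq_rlshift.
- by move/eqP; rewrite eq_lrshift.
- exact: lshift_inj.
Qed.

Lemma hybrid_partS t (j : 'I_k) : j != t :> nat -> hybrid_part t.+1 j = hybrid_part t j.
Proof. by rewrite /hybrid_part ltnS leq_eqVlt => /negbTE ->. Qed.

Let V t j := tnth Bs (hybrid_part t j).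

Lemma exists_nonhomogeneous_hybrid (y : {ffun 'I_(k + k) -> 'I_n}) :
  1 < k -> 1 < s -> (forall a, y a \in tnth Bs a) -> edge_nonedge E y ->
  exists t, ~ homogeneous_on k E (parts_union (V t)).
Proof.
move=> k_gt1 s_gt1 y_in /andP [lE rE].
have y_inj : injective y.
  move=> a b eq_y; apply/eqP; apply: contraTT (y_in a) => neq_ab.
  by rewrite eq_y (disjointFl (disjBs neq_ab) (y_in b)).
pose T t := [set y (hybrid_part t j) | j : 'I_k].
have T_sub t : T t \in ksubsets k (parts_union (V t)).
  rewrite inE card_imset => [|i j /y_inj /hybrid_part_inj //]; rewrite card_ord eqxx andbT.
  by apply/subsetP => _ /imsetP [j _ ->]; apply/bigcupP; exists j.
have [t lt_tk /andP [Tt Tt1]] : exists2 t, t < k & (T t \in E) && (T t.+1 \notin E).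
  apply: exists_switch.
    by congr (_ \in E): lE; apply: eq_imset => j; rewrite ffunE /hybrid_part ltn0.
  by congr (~~ (_ \in E)): rE; apply: eq_imset => j; rewrite ffunE /hybrid_part ltn_ord.
pose t' : 'I_k := Ordinal lt_tk.
(* A k-subset of the k-1 parts shared by the hybrids t and t+1 belongs to both patterns. *)
pose U := \bigcup_(j | j != t') V t j.
have cardU : k <= #|U|.
  rewrite card_bigcup_disjoint => [|i j _ _ neq_ij]; last first.
    by apply: disjBs; rewrite (inj_eq (hybrid_part_inj (t := t))).
  rewrite (eq_bigr (fun _ => s)) => [|j _]; last exact: cardBs.
  rewrite sum_nat_const cardC1 card_ord; nia.
have [SpU cardSp] := subset_of_cardP cardU.
have Sp_sub t0 : (t0 == t) || (t0 == t.+1) ->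
    subset_of_card U k \in ksubsets k (parts_union (V t0)).
  move=> t0_t; rewrite inE cardSp eqxx andbT; apply: subset_trans SpU _.
  apply/bigcupsP => j neq_jt; apply: subset_trans (bigcup_sup j isT).
  by case/orP: t0_t => /eqP -> //; rewrite /V hybrid_partS.
case SpE: (subset_of_card U k \in E).
  by exists t.+1; apply: (not_homogeneous_on (Sp_sub _ _) (T_sub _)); rewrite ?eqxx ?orbT.
by exists t; apply: (not_homogeneous_on (T_sub t) (Sp_sub _ _)); rewrite ?eqxx ?SpE.
Qed.

End Hybrid.

Import Order.TTheory GRing.Theory Num.Theory.
Local Open Scope ring_scope.

Lemma density_chain (R : realFieldType) (N m r : nat) (cnt : nat -> nat) : (0 < N)%N ->
  (forall j, (j < r)%N -> (cnt j ^ m * N <= N ^ m * cnt j.+1)%N) ->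
  ((cnt 0)%:R / N%:R) ^+ (m ^ r) <= (cnt r)%:R / N%:R :> R.
Proof.
move=> N_gt0 step.
suff chain j : (j <= r)%N -> ((cnt 0)%:R / N%:R) ^+ (m ^ j) <= (cnt j)%:R / N%:R :> R.
  exact: chain.
elim: j => [|j IHj] le_jr; first by rewrite expr1.
have dens_ge0 i : 0 <= (cnt i)%:R / N%:R :> R by rewrite divr_ge0.
rewrite expnSr exprM (le_trans (lerXn2r _ _ _ (IHj (ltnW le_jr)))) ?nnegrE ?exprn_ge0 //.
have := step j le_jr; rewrite -(ler_nat R) !natrM !natrX => {}step.
rewrite expr_div_n ler_pdivrMr ?exprn_gt0 ?ltr0n // mulrAC ler_pdivlMr ?ltr0n //.
by rewrite [leRHS]mulrC.
Qed.

Lemma blowup_density (R : realFieldType) r L (Y : finType) (g : {ffun 'I_r -> Y} -> bool)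
    (d : R) : (0 < #|Y|)%N -> 0 <= d -> d * #|Y|%:R ^+ r <= (\sum_x g x)%:R ->
  d ^+ (L.+1 ^ r) * #|Y|%:R ^+ (r * L.+1) <= (blowup_count L g r)%:R.
Proof.
move=> Y_gt0 d_ge0 dense; set N := #|{ffun 'I_r * 'I_L.+1 -> Y}|.
have NE : N = (#|Y| ^ (r * L.+1 - r) * #|Y| ^ r)%N.
  by rewrite -expnD subnK ?leq_pmulr // /N card_ffun card_prod !card_ord.
have N_gt0 : (0 < N)%N by rewrite NE muln_gt0 !expn_gt0 Y_gt0.
have chain := density_chain R N_gt0 (fun j lt_jr => blowup_count_step L g (Ordinal lt_jr)).
have d_le : d <= (blowup_count L g 0)%:R / N%:R.
  rewrite blowup_count0 NE !natrM !natrX -mulf_div divff ?mul1r.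
    by rewrite ler_pdivlMr // exprn_gt0 // ltr0n.
  by rewrite expf_neq0 // pnatr_eq0 -lt0n.
have -> : #|Y|%:R ^+ (r * L.+1) = N%:R :> R by rewrite /N card_ffun card_prod !card_ord natrX.
rewrite -ler_pdivlMr ?ltr0n //; apply: le_trans chain.
by rewrite lerXn2r // nnegrE (le_trans d_ge0 d_le).
Qed.

Section GoodBlowup.
Variables (R : realFieldType) (r L k n : nat) (g : {ffun 'I_r -> 'I_n} -> bool).
Variables (W : {set {set 'I_n}}) (eps : R).
Let M := (r * L.+1)%N.

Lemma exists_good_blowup :
  (0 < k <= M)%N -> k_uniform k W -> 0 < eps ->
  eps * n%:R ^+ M <= (blowup_count L g r)%:R ->
  #|W|%:R <= eps / (2 * M%:R ^+ k) * n%:R ^+ k ->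
  2 * M%:R ^+ 2 / eps < n%:R ->
  exists B : {ffun 'I_r * 'I_L.+1 -> 'I_n},
    [/\ injective B, blown_up g r B & forall w, w \in W -> ~~ (w \subset codom B)].
Proof.
move=> /andP [k_gt0 le_kM] W_unif eps_gt0 many few_W n_large.
have M_gt0 : (0 < M)%N := leq_trans k_gt0 le_kM.
have r_gt0 : (0 < r)%N by move: M_gt0; rewrite muln_gt0 => /andP [].
have n_gt0 : (0 < n)%N.
  rewrite -(ltr0n R); apply: le_lt_trans n_large.
  by rewrite divr_ge0 ?mulr_ge0 ?exprn_ge0 ?(ltW eps_gt0).
pose good (B : {ffun 'I_r * 'I_L.+1 -> 'I_n}) :=
  [&& injectiveb B, blown_up g r B & ~~ [exists w in W, w \subset codom B]].
case: (pickP good) => [B /and3P [/injectiveP B_inj B_blown /existsPn B_W]|none].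
  by exists B; split => // w wW; have := B_W w; rewrite wW.
have few_bad : (blowup_count L g r <= M ^ 2 * n ^ M.-1 + #|W| * (M ^ k * n ^ (M - k)))%N.
  have cardP : #|{: 'I_r * 'I_L.+1}| = M by rewrite card_prod !card_ord.
  have := leq_add (count_ffun_noninjective ('I_r * 'I_L.+1)%type 'I_n)
    (count_ffun_covering (Ordinal r_gt0, @ord0 L) (Ordinal n_gt0) W_unif).
  rewrite cardP card_ord -big_split; apply: leq_trans; apply: leq_sum => B _.
  by move: (none B); rewrite /good; case: blown_up; case: injectiveb; case: existsP.
have {}few_bad : eps * n%:R ^+ M <=
    M%:R ^+ 2 * n%:R ^+ M.-1 + #|W|%:R * (M%:R ^+ k * n%:R ^+ (M - k)).
  by apply: le_trans many _; rewrite -!natrX -!natrM -natrD ler_nat.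
have few_covering : #|W|%:R * (M%:R ^+ k * n%:R ^+ (M - k)) <= eps / 2 * n%:R ^+ M.
  apply: le_trans (ler_wpM2r _ few_W) _; first by rewrite mulr_ge0 ?exprn_ge0.
  have Mk_neq0 : M%:R ^+ k != 0 :> R by rewrite expf_neq0 // pnatr_eq0 -lt0n.
  suff -> : eps / (2 * M%:R ^+ k) * n%:R ^+ k * (M%:R ^+ k * n%:R ^+ (M - k)) =
    eps / 2 * n%:R ^+ M by [].
  by rewrite -(subnKC le_kM) exprD addKn subnKC //; field.
have nM : n%:R ^+ M = n%:R * n%:R ^+ M.-1 :> R by rewrite -exprS prednK.
have X_gt0 : 0 < n%:R ^+ M.-1 :> R by rewrite exprn_gt0 // ltr0n.
have : eps / 2 * n%:R ^+ M <= M%:R ^+ 2 * n%:R ^+ M.-1 by lra.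
rewrite nM; move: n_large; rewrite ltr_pdivrMr // => n_large; nra.
Qed.

End GoodBlowup.

Lemma edge_nonedge_density (R : realFieldType) n k (E : {set {set 'I_n}}) (delta : R) :
  (0 < n)%N -> k_uniform k E -> 0 <= delta ->
  delta * n%:R ^+ k <= Num.min (#|E|%:R) ('C(n, k)%:R - #|E|%:R) ->
  delta ^+ 2 * n%:R ^+ (k + k) <= (\sum_x @edge_nonedge n k E x)%:R.
Proof.
move=> n_gt0 E_unif delta_ge0; rewrite le_min => /andP [dense sparse].
have E_le : (#|E| <= 'C(n, k))%N.
  rewrite -[X in 'C(X, _)]card_ord -card_draws subset_leq_card //.
  by apply/subsetP => e eE; rewrite inE E_unif.
apply: le_trans (_ : (#|E| * ('C(n, k) - #|E|))%:R <= _); last first.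
  by rewrite ler_nat count_edge_nonedge.
rewrite natrM natrB // exprD expr2 mulrACA.
by apply: ler_pM => //; rewrite mulr_ge0 ?exprn_ge0.
Qed.

Lemma blowup_edge_nonedge_density (R : realFieldType) n k L (E : {set {set 'I_n}}) (delta : R) :
  (0 < n)%N -> k_uniform k E -> 0 <= delta ->
  delta * n%:R ^+ k <= Num.min (#|E|%:R) ('C(n, k)%:R - #|E|%:R) ->
  (delta ^+ 2) ^+ (L.+1 ^ (k + k)) * n%:R ^+ ((k + k) * L.+1) <=
  (blowup_count L (@edge_nonedge n k E) (k + k))%:R.
Proof.
move=> n_gt0 E_unif delta_ge0 E_dense.
have := @blowup_density R (k + k) L 'I_n (edge_nonedge E) (delta ^+ 2).
by rewrite card_ord; apply; rewrite ?exprn_ge0 //; apply: edge_nonedge_density.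
Qed.

Lemma pattern_from_blocks n k s L (E W : {set {set 'I_n}})
    (B : {ffun 'I_(k + k) * 'I_L.+1 -> 'I_n}) (Bs : (k + k).-tuple {set 'I_n}) :
  (1 < k)%N -> (1 < s)%N -> injective B -> blown_up (edge_nonedge E) (k + k) B ->
  (forall w, w \in W -> ~~ (w \subset codom B)) ->
  (forall a, tnth Bs a \subset tnth (blowup_rows B) a /\ #|tnth Bs a| = s) ->
  profile_invariant (fun S => S \in E) k Bs ->
  exists V : 'I_k -> {set 'I_n},
    [/\ induced_pattern k s E V, ~ homogeneous_on k E (parts_union V)
      & avoids k (parts_union V) W].
Proof.
move=> k_gt1 s_gt1 B_inj B_blown B_W BsP invBs.
have cardBs a : #|tnth Bs a| = s by have [] := BsP a.
have disjBs := pairwise_disjointS (fun a => (BsP a).1) (blowup_rows_disjoint B_inj).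
pose c := [ffun a => odflt ord0 [pick l | B (a, l) \in tnth Bs a]].
have c_in a : blowup_transversal B c a \in tnth Bs a.
  have [x x_in] : exists x, x \in tnth Bs a by apply/set0Pn; rewrite -card_gt0 cardBs ltnW.
  rewrite !ffunE; case: pickP => [l //|none].
  have /imsetP [l _ eq_x] : x \in [set B (a, l) | l : 'I_L.+1].
    by have := subsetP (BsP a).1 x x_in; rewrite tnth_mktuple.
  by move: (none l); rewrite -eq_x x_in.
have [t nonhom] := exists_nonhomogeneous_hybrid cardBs disjBs k_gt1 s_gt1 c_in
  (blown_up_all B_blown c).
exists (fun j => tnth Bs (hybrid_part t j)); split => //.
  exact/induced_pattern_tnth/hybrid_part_inj.
move=> S /setIdP [SU _]; apply/negP => /B_W/negP; apply; apply: subset_trans SU _.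
apply/bigcupsP => j _; apply: subset_trans (BsP _).1 _; rewrite tnth_mktuple.
by apply/subsetP => _ /imsetP [l _ ->]; apply: codom_f.
Qed.

Theorem proposition3p2 (R : realType) (k s : nat) (delta : R) :
  (2 <= k)%N -> (2 <= s)%N -> 0 < delta ->
  exists gamma : R, 0 < gamma /\
  exists n0 : nat, forall n : nat, (n0 <= n)%N ->
  forall E W : {set {set 'I_n}},
    k_uniform k E ->
    delta * n%:R ^+ k <= Num.min (#|E|%:R) ('C(n, k)%:R - #|E|%:R) ->
    k_uniform k W ->
    #|W|%:R <= gamma * n%:R ^+ k ->
    exists V : 'I_k -> {set 'I_n},
      [/\ induced_pattern k s E V,
          ~ homogeneous_on k E (parts_union V)
        & avoids k (parts_union V) W].
Proof.
move=> k_gt1 s_gt1 delta_gt0.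
have [L ramseyL] := product_ramsey (k + k) k 2 s.
pose M := ((k + k) * L.+1)%N; pose eps := (delta ^+ 2) ^+ (L.+1 ^ (k + k)).
have eps_gt0 : 0 < eps by rewrite !exprn_gt0.
have le_kM : (0 < k <= M)%N by rewrite (ltnW k_gt1) (leq_trans (leq_addr k k)) ?leq_pmulr.
exists (eps / (2 * M%:R ^+ k)).
split; first by rewrite divr_gt0 ?mulr_gt0 ?exprn_gt0 ?ltr0n ?muln_gt0 ?addn_gt0 ?(ltnW k_gt1).
exists (Num.Def.archi_bound (2 * M%:R ^+ 2 / eps)).+1.
move=> n n_large E W E_unif E_dense W_unif W_small.
have n_big : 2 * M%:R ^+ 2 / eps < n%:R.
  apply: lt_le_trans (archi_boundP _) _; last by rewrite ler_nat ltnW.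
  by apply/divr_ge0/ltW => //; apply/mulr_ge0/exprn_ge0.
have dense := blowup_edge_nonedge_density L (leq_trans (ltn0Sn _) n_large) E_unif
  (ltW delta_gt0) E_dense.
have [B [B_inj B_blown B_W]] := exists_good_blowup le_kM W_unif eps_gt0 dense W_small n_big.
have [Bs [BsP invBs]] := ramseyL _ _ (fun S => S \in E) (blowup_rows B) (eq_leq card_bool)
  (fun a => leqW (eq_leq (esym (card_blowup_rows B_inj a)))) (blowup_rows_disjoint B_inj).
exact: pattern_from_blocks B_inj B_blown B_W BsP invBs.
Qed.
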